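(* Let $p \geqslant 3$ be a prime, $d \geqslant 2$, and $V$ a $d$-dimensional vector space over $\mathbb{F}_p$. Let $G = \mathrm{Sym}(V)$ and $H = \mathrm{AGL}(V)$. Let $W$ be a proper non-trivial subspace of $V$ and let $K < \mathrm{GL}(V)$ be the setwise stabiliser of $W$ in $\mathrm{GL}(V)$. Then there exists $x \in G$ such that $H \cap H^x = K$.
   Context: $\mathrm{AGL}(V)$ is the group of invertible affine transformations $\mathbf{v} \mapsto \mathbf{v}g + \mathbf{u}$ ($g \in \mathrm{GL}(V)$, $\mathbf{u} \in V$) of $V$, regarded as a subgroup of $\mathrm{Sym}(V)$; $\mathrm{GL}(V)$ is the subgroup of linear maps. *)

From HB Require Import structures.
From mathcomp Require Import all_boot all_order all_algebra all_fingroup.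
Set Implicit Arguments. Unset Strict Implicit. Unset Printing Implicit Defensive.
Import GRing.Theory.
Local Open Scope ring_scope.

(* V = 'rV['F_p]_d  (row vectors, maps act on the right: v |-> v *m g + u). *)

Definition AGL (p d : nat) : {set {perm 'rV['F_p]_d}} :=
  [set s : {perm 'rV['F_p]_d} |
     [exists g : 'M['F_p]_d, [exists u : 'rV['F_p]_d,
        (g \in unitmx) && [forall v : 'rV['F_p]_d, s v == v *m g + u]]]].

Definition subspace_set (p d : nat) (W : 'M['F_p]_d) : {set 'rV['F_p]_d} :=
  [set v : 'rV['F_p]_d | (v <= W)%MS].

Definition GL_stab (p d : nat) (W : 'M['F_p]_d) : {set {perm 'rV['F_p]_d}} :=
  [set s : {perm 'rV['F_p]_d} |
     [exists g : 'M['F_p]_d,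
        (g \in unitmx) && [forall v : 'rV['F_p]_d, s v == v *m g]]
     && ((fun v => s v) @: subspace_set W == subspace_set W)].

From mathcomp Require Import all_boot all_order all_algebra all_fingroup.
Set Implicit Arguments. Unset Strict Implicit. Unset Printing Implicit Defensive.
Import GRing.Theory.
Local Open Scope ring_scope.

(* Take for x the involution tau of V that negates the vectors of W and fixes
   all the others. Since tau moves v only inside its coset v + W, if both
   s : v |-> v A + b and tau s tau : v |-> v B + c are affine then B - A maps
   V into W, and comparing the two on W shows that B + A maps W into W; as 2
   is invertible, A stabilises W. The translation b must then vanish: if b is
   outside W, comparing the two maps on the three distinct cosets W,
   b A^-1 + W and b A^-1 + w + W forces w A = - w A for a nonzero w in W; if b
   is in W, the two maps differ by the constant b - c off W, so evaluating at
   u and 2 u off W gives c = b, while c = tau b = -b.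
   Conversely every element of GL(V) stabilising W commutes with tau. *)

Section SubspaceArithmetic.

Variable F : fieldType.

Lemma submxN m1 m2 n (A : 'M[F]_(m1, n)) (B : 'M[F]_(m2, n)) :
  (- A <= B)%MS = (A <= B)%MS.
Proof. by rewrite (eqmx_opp A). Qed.

Lemma submxDr m1 m2 n (A C : 'M[F]_(m1, n)) (B : 'M[F]_(m2, n)) :
  (C <= B)%MS -> ((A + C)%R <= B)%MS = (A <= B)%MS.
Proof.
move=> sCB; apply/idP/idP => [sACB|sAB]; last exact: addmx_sub.
by rewrite -(addrK C A) addmx_sub ?submxN.
Qed.

Lemma submxMn m1 m2 n (A : 'M[F]_(m1, n)) (B : 'M[F]_(m2, n)) k :
  k%:R != 0 :> F -> (A *+ k <= B)%MS = (A <= B)%MS.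
Proof. by move=> k_neq0; rewrite -scaler_nat (eqmx_scale A k_neq0). Qed.

Lemma mulmx_sub_from_outside m1 m2 n p (W : 'M[F]_(m1, n)) (M : 'M[F]_(n, p))
    (U : 'M[F]_(m2, p)) (u0 : 'rV[F]_n) :
  ~~ (u0 <= W)%MS -> (forall v : 'rV_n, ~~ (v <= W)%MS -> (v *m M <= U)%MS) ->
  forall v : 'rV_n, (v *m M <= U)%MS.
Proof.
move=> u0W sMU v; have [vW|/sMU //] := boolP (v <= W)%MS.
have u0v_out : ~~ ((u0 + v)%R <= W)%MS by rewrite submxDr.
have -> : v = (u0 + v) - u0 by rewrite addrAC subrr add0r.
by rewrite mulmxBl addmx_sub ?submxN ?sMU.
Qed.

End SubspaceArithmetic.

Lemma lmod_mulrn_eq0 (F : fieldType) (V : lmodType F) (x : V) k :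
  k%:R != 0 :> F -> (x *+ k == 0) = (x == 0).
Proof. by move=> k_neq0; rewrite -scaler_nat scaler_eq0 (negPf k_neq0). Qed.

Section Stable.

Variables (F : fieldType) (n : nat) (W A : 'M[F]_n).

Lemma stablemxP : reflect (forall v : 'rV_n, (v <= W)%MS -> (v *m A <= W)%MS)
                          (stablemx W A).
Proof.
apply: (iffP idP) => [stWA v vW|stWA]; first exact: submx_trans (submxMr A vW) stWA.
by apply/row_subP => i; rewrite row_mul stWA ?row_sub.
Qed.

Lemma stablemx_unit_submx (v : 'rV_n) :
  A \in unitmx -> stablemx W A -> (v *m A <= W)%MS = (v <= W)%MS.
Proof.
move=> uA stWA; have WA_eq : (W *m A == W)%MS.
  by rewrite -(mxrank_leqif_eq stWA) mxrankMfree ?row_free_unit.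
by rewrite -(submxMfree v W (_ : row_free A)) ?row_free_unit // (eqmxP WA_eq).
Qed.

End Stable.

Section NegateOn.

Variables (F : fieldType) (n : nat) (W : 'M[F]_n).

Definition negate_on (v : 'rV[F]_n) := if (v <= W)%MS then - v else v.

Lemma negate_on_in v : (v <= W)%MS -> negate_on v = - v.
Proof. by rewrite /negate_on => ->. Qed.

Lemma negate_on_out v : ~~ (v <= W)%MS -> negate_on v = v.
Proof. by rewrite /negate_on => /negPf ->. Qed.

Lemma negate_onK : involutive negate_on.
Proof.
move=> v; have [vW|vW] := boolP (v <= W)%MS.
  by rewrite !negate_on_in ?opprK ?submxN.
by rewrite !negate_on_out.
Qed.

Lemma negate_on_subr v : (negate_on v - v <= W)%MS.
Proof.
have [vW|vW] := boolP (v <= W)%MS; last by rewrite negate_on_out // subrr sub0mx.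
by rewrite negate_on_in // addmx_sub ?submxN.
Qed.

Lemma negate_on_mulmx (A : 'M[F]_n) v :
  A \in unitmx -> stablemx W A -> negate_on (v *m A) = negate_on v *m A.
Proof.
move=> uA stWA; have [vW|vW] := boolP (v <= W)%MS.
  by rewrite !negate_on_in ?mulNmx ?stablemx_unit_submx.
by rewrite !negate_on_out ?stablemx_unit_submx.
Qed.

End NegateOn.

Section AffineConjugate.

Variables (F : fieldType) (n : nat) (W A B : 'M[F]_n) (b c : 'rV[F]_n).
Variables (u0 w0 : 'rV[F]_n).
Hypothesis two_neq0 : 2%:R != 0 :> F.
Hypothesis unitA : A \in unitmx.
Hypothesis u0_out : ~~ (u0 <= W)%MS.
Hypotheses (w0_in : (w0 <= W)%MS) (w0_neq0 : w0 != 0).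
Hypothesis conj_affine :
  forall v, negate_on W (negate_on W v *m A + b) = v *m B + c.

Local Notation tau := (negate_on W).

Lemma conj_translation : tau b = c.
Proof.
by have := conj_affine 0; rewrite [tau 0]negate_on_in ?sub0mx // oppr0 !mul0mx !add0r.
Qed.

Lemma conj_subr (v : 'rV_n) : ((v *m B + c) - (tau v *m A + b) <= W)%MS.
Proof. by rewrite -conj_affine negate_on_subr. Qed.

Lemma conj_linear_diff_sub (v : 'rV_n) : (v *m (B - A) <= W)%MS.
Proof.
apply: (mulmx_sub_from_outside u0_out) => {}v vW.
have cb_sub : (c - b <= W)%MS by rewrite -conj_translation negate_on_subr.
by have := conj_subr v; rewrite negate_on_out // opprD addrACA -mulmxBr submxDr.
Qed.

Lemma conj_linear_sum_sub (w : 'rV_n) : (w <= W)%MS -> (w *m (B + A) <= W)%MS.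
Proof.
move=> wW; have cb_sub : (c - b <= W)%MS by rewrite -conj_translation negate_on_subr.
have := conj_subr w; rewrite negate_on_in // mulNmx.
by rewrite opprD opprK addrACA -mulmxDr submxDr.
Qed.

Lemma conj_stable : stablemx W A.
Proof.
apply/stablemxP => w wW; rewrite -(submxMn _ _ two_neq0).
have -> : w *m A *+ 2 = w *m (B + A) - w *m (B - A).
  by rewrite mulmxDr mulmxBr opprB addrC addrA subrK mulr2n.
by rewrite addmx_sub ?submxN ?conj_linear_sum_sub ?conj_linear_diff_sub.
Qed.

Lemma conj_eq_off (v : 'rV_n) : ~~ (v <= W)%MS -> ~~ ((v *m A + b)%R <= W)%MS ->
  v *m (B - A) = b - c.
Proof.
move=> vW vAbW; have := conj_affine v.
rewrite [tau v]negate_on_out // negate_on_out // => vE.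
rewrite mulmxBr; have -> : v *m B = v *m A + b - c by rewrite vE addrK.
by rewrite addrAC [v *m A + b]addrC addrK.
Qed.

Lemma conj_translation_sub : (b <= W)%MS.
Proof.
apply/negPn/negP => bW; have cb : c = b by rewrite -conj_translation negate_on_out.
have twob_out : ~~ (b *+ 2 <= W)%MS by rewrite submxMn.
pose u := b *m invmx A; have uA : u *m A = b by rewrite mulmxKV.
have u_out : ~~ (u <= W)%MS by rewrite -(stablemx_unit_submx _ unitA conj_stable) uA.
have w0A_in : (w0 *m A <= W)%MS by apply/(stablemxP _ _ conj_stable).
have u_eq : u *m (B - A) = 0.
  have : ~~ ((u *m A + b)%R <= W)%MS by rewrite uA -mulr2n.
  by move/(conj_eq_off u_out) ->; rewrite cb subrr.
have uw0_eq : (u + w0) *m (B - A) = 0.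
  have uw0_out : ~~ ((u + w0)%R <= W)%MS by rewrite submxDr.
  have : ~~ (((u + w0) *m A + b)%R <= W)%MS.
    by rewrite mulmxDl uA addrAC -mulr2n submxDr.
  by move/(conj_eq_off uw0_out) ->; rewrite cb subrr.
have w0_diff : w0 *m (B - A) = 0.
  by rewrite -[w0](addKr u) mulmxDl uw0_eq mulNmx u_eq oppr0 addr0.
have w0B : w0 *m B = - (w0 *m A).
  have := conj_affine w0; rewrite [tau w0]negate_on_in // mulNmx negate_on_out.
    by rewrite cb => /addIr.
  by rewrite addrC submxDr ?submxN.
have w0A0 : w0 *m A = 0.
  move/eqP: w0_diff; rewrite mulmxBr w0B -opprD -mulr2n oppr_eq0.
  by rewrite lmod_mulrn_eq0 // => /eqP.
by move/negP: w0_neq0; apply; rewrite -(mulmxK unitA w0) w0A0 mul0mx.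
Qed.

Lemma conj_translation_eq0 : b = 0.
Proof.
have bW := conj_translation_sub.
have cb : c = - b by rewrite -conj_translation negate_on_in.
have off (v : 'rV_n) : ~~ (v <= W)%MS -> v *m (B - A) = b *+ 2.
  move=> vW; rewrite conj_eq_off ?cb ?opprK ?mulr2n //.
  by rewrite submxDr // stablemx_unit_submx ?conj_stable.
have twou0_out : ~~ (u0 *+ 2 <= W)%MS by rewrite submxMn.
have := off _ twou0_out; rewrite [u0 *+ 2]mulr2n mulmxDl off // -[RHS]addr0.
by move/addrI/eqP; rewrite lmod_mulrn_eq0 // => /eqP.
Qed.

End AffineConjugate.

Section NegatePerm.

Variables (F : finFieldType) (n : nat) (W : 'M[F]_n).

Definition negate_perm : {perm 'rV[F]_n} := perm (can_inj (negate_onK W)).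

Lemma negate_permE : negate_perm =1 negate_on W.
Proof. exact: permE. Qed.

Lemma negate_permV : (negate_perm^-1)%g = negate_perm.
Proof.
apply/permP => v; apply: (@perm_inj _ negate_perm).
by rewrite permKV !negate_permE negate_onK.
Qed.

Lemma conjg_negate_perm (s : {perm 'rV[F]_n}) v :
  (s ^ negate_perm)%g v = negate_on W (s (negate_on W v)).
Proof. by rewrite conjgE negate_permV !permM !negate_permE. Qed.

End NegatePerm.

Section AffineGroup.

Variables (p d : nat).

Lemma AGLP (s : {perm 'rV['F_p]_d}) :
  reflect (exists A b, A \in unitmx /\ forall v, s v = v *m A + b) (s \in AGL p d).
Proof.
rewrite inE; apply: (iffP existsP) => [[A /existsP [b /andP [uA /forallP sE]]]|].
  by exists A, b; split=> // v; apply/eqP.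
case=> A [b [uA sE]]; exists A; apply/existsP; exists b.
by rewrite uA; apply/forallP => v; rewrite sE.
Qed.

Lemma image_subspace_set_eq (W A : 'M['F_p]_d) (s : {perm 'rV['F_p]_d}) :
  (forall v, s v = v *m A) ->
  ((fun v => s v) @: subspace_set W == subspace_set W) = stablemx W A.
Proof.
move=> sE; rewrite eqEcard card_imset ?leqnn ?andbT; last exact: perm_inj.
apply/subsetP/stablemxP => [sub v vW|stWA _ /imsetP [v vW ->]].
  by have := sub (s v) (imset_f _ (_ : v \in subspace_set W)); rewrite !inE sE; apply.
by rewrite inE in vW; rewrite inE sE stWA.
Qed.

Lemma GL_stabP (W : 'M['F_p]_d) (s : {perm 'rV['F_p]_d}) :
  reflect (exists2 A, A \in unitmx /\ stablemx W A & forall v, s v = v *m A)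
          (s \in GL_stab W).
Proof.
rewrite inE; apply: (iffP andP) => [[/existsP [A /andP [uA /forallP sE]]]|[A [uA stWA] sE]].
  have {}sE v : s v = v *m A by apply/eqP.
  by rewrite (image_subspace_set_eq _ sE) => stWA; exists A.
rewrite (image_subspace_set_eq _ sE); split=> //.
by apply/existsP; exists A; rewrite uA; apply/forallP => v; rewrite sE.
Qed.

End AffineGroup.

Theorem lemma3p3 (p d : nat) (W : 'M['F_p]_d) :
  prime p -> (3 <= p)%N -> (2 <= d)%N ->
  (0 < \rank W)%N -> (\rank W < d)%N ->
  exists x : {perm 'rV['F_p]_d},
    (AGL p d :&: (AGL p d :^ x))%g = GL_stab W.
Proof.
(* 2 <= d is implied by 0 < \rank W < d. *)
move=> p_prime p_ge3 _ W_neq0 W_proper.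
have two_neq0 : 2%:R != 0 :> 'F_p by rewrite -(dvdn_pcharf (pchar_Fp p_prime)) gtnNdvd.
have [u0 u0_out] : exists u0 : 'rV_d, ~~ (u0 <= W)%MS.
  have : ~~ (1%:M <= W)%MS by rewrite sub1mx /row_full ltn_eqF.
  by case/row_subPn => i; exists (row i 1%:M).
have [w0 w0_in w0_neq0] : exists2 w0 : 'rV_d, (w0 <= W)%MS & w0 != 0.
  by apply/rowV0Pn; rewrite -mxrank_eq0 -lt0n.
exists (negate_perm W); apply/setP => s; rewrite in_setI mem_conjg negate_permV.
apply/andP/GL_stabP => [[/AGLP [A [b [uA sE]]] /AGLP [B [c [_ conjE]]]]|[A [uA stWA] sE]].
  have conj_affine v : negate_on W (negate_on W v *m A + b) = v *m B + c.
    by rewrite -conjE conjg_negate_perm sE.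
  have b0 := conj_translation_eq0 two_neq0 uA u0_out w0_in w0_neq0 conj_affine.
  exists A; first by split; last exact: conj_stable two_neq0 u0_out conj_affine.
  by move=> v; rewrite sE b0 addr0.
split; apply/AGLP; exists A, 0; split=> // v; rewrite addr0 ?conjg_negate_perm sE //.
by rewrite -negate_on_mulmx // negate_onK.
Qed.
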